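(* Let $\delta>0$ and let $S=\{p_1,\dots,p_n\}$ be a set of $n$ points in $\mathbb{R}^d$. Determining all pairs $i\ne j$ such that $\|p_i-p_j\|_\infty\le\delta$ can be done using $O(dn\log n)$ pairwise comparisons of real numbers (i.e., by a 2-linear decision tree of depth $O(dn\log n)$).
   Context: $\|x\|_\infty=\max_k |x[k]|$. A $k$-linear decision tree is one in which each branching is based on the sign of a linear expression with at most $k$ terms; its complexity is its depth. *)

From HB Require Import structures.
From mathcomp Require Import all_boot all_order all_algebra.
From mathcomp Require Import reals.
Set Implicit Arguments. Unset Strict Implicit. Unset Printing Implicit Defensive.
Import Order.TTheory GRing.Theory Num.Theory.
Local Open Scope ring_scope.

(* An internal node holds a linear expression  sum_t a_t * x(v_t) + c
   (a list of (coefficient, variable) terms plus a constant term) and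
   branches three ways on its sign (<0, =0, >0). *)
Inductive ldt (R V O : Type) : Type :=
| LLeaf of O
| LNode of seq (R * V) & R & ldt R V O & ldt R V O & ldt R V O.

Arguments LLeaf {R V O}.
Arguments LNode {R V O}.

Definition lin_val (R : realType) (V : Type) (a : seq (R * V)) (c : R)
  (x : V -> R) : R := \sum_(t <- a) t.1 * x t.2 + c.

Fixpoint ldt_eval (R : realType) (V O : Type) (T : ldt R V O) (x : V -> R) : O :=
  match T with
  | LLeaf o => o
  | LNode a c tl te tg =>
      let v := lin_val a c x in
      if v < 0 then ldt_eval tl x
      else if v == 0 then ldt_eval te x
      else ldt_eval tg x
  end.

Fixpoint ldt_depth (R V O : Type) (T : ldt R V O) : nat :=
  match T with
  | LLeaf _ => 0%N
  | LNode _ _ tl te tg =>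
      (maxn (ldt_depth tl) (maxn (ldt_depth te) (ldt_depth tg))).+1
  end.

Fixpoint ldt_klinear (R V O : Type) (k : nat) (T : ldt R V O) : bool :=
  match T with
  | LLeaf _ => true
  | LNode a _ tl te tg =>
      [&& (size a <= k)%N, ldt_klinear k tl, ldt_klinear k te & ldt_klinear k tg]
  end.

Definition linf_norm (R : realType) (d : nat) (x : 'I_d -> R) : R :=
  \big[Num.max/0]_(k < d) `|x k|.

Definition close_pairs (R : realType) (n d : nat) (delta : R)
  (p : 'I_n -> 'I_d -> R) : {set 'I_n * 'I_n} :=
  [set ij : 'I_n * 'I_n | (ij.1 != ij.2) &&
     (linf_norm (fun k => p ij.1 k - p ij.2 k) <= delta)].

From HB Require Import structures.
From mathcomp Require Import all_boot all_order all_algebra.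
From mathcomp Require Import reals.
From mathcomp Require Import zify lra.
Set Implicit Arguments. Unset Strict Implicit. Unset Printing Implicit Defensive.
Import Order.TTheory GRing.Theory Num.Theory.
Local Open Scope ring_scope.

(** For each coordinate k, merge sort the 2n reals [p_i[k]] and [p_i[k] + delta]
   with a comparison tree; each comparison asks for the sign of a difference
   of two inputs plus a constant, so the tree is 2-linear and has depth
   O(n log n).  Since [|p_i[k] - p_j[k]| <= delta] iff [p_i[k] <= p_j[k] + delta]
   and [p_j[k] <= p_i[k] + delta], the close pairs can be read off the d sorted
   lists alone.  Equal values are ordered by a fixed injective rank, which
   makes the comparison a total order, so that no assumption on the points
   is needed. *)

Section DecisionTreeMonad.

Variables (R : realType) (V : Type).

Fixpoint ldt_bind A B (T : ldt R V A) (f : A -> ldt R V B) : ldt R V B :=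
  match T with
  | LLeaf o => f o
  | LNode a c tl te tg => LNode a c (ldt_bind tl f) (ldt_bind te f) (ldt_bind tg f)
  end.

Fixpoint ldt_all A (P : A -> Prop) (T : ldt R V A) : Prop :=
  match T with
  | LLeaf o => P o
  | LNode _ _ tl te tg => [/\ ldt_all P tl, ldt_all P te & ldt_all P tg]
  end.

Lemma ldt_eval_bind A B (T : ldt R V A) (f : A -> ldt R V B) x :
  ldt_eval (ldt_bind T f) x = ldt_eval (f (ldt_eval T x)) x.
Proof. by elim: T => //= a c tl -> te -> tg ->; case: ifP => //; case: ifP. Qed.

Lemma ldt_all_bind A B (P : A -> Prop) (Q : B -> Prop) T (f : A -> ldt R V B) :
  ldt_all P T -> (forall o, P o -> ldt_all Q (f o)) -> ldt_all Q (ldt_bind T f).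
Proof.
by move=> + hf; elim: T => [o /hf|a c tl IHl te IHe tg IHg [/IHl ? /IHe ? /IHg ?]].
Qed.

Lemma ldt_depth_bind_in A B (P : A -> Prop) T (f : A -> ldt R V B) M :
  ldt_all P T -> (forall o, P o -> (ldt_depth (f o) <= M)%N) ->
  (ldt_depth (ldt_bind T f) <= ldt_depth T + M)%N.
Proof.
move=> + hf; elim: T => [o /hf //|a c tl IHl te IHe tg IHg [/IHl ? /IHe ? /IHg ?]] /=.
lia.
Qed.

Lemma ldt_depth_bind A B T (f : A -> ldt R V B) M :
  (forall o, (ldt_depth (f o) <= M)%N) ->
  (ldt_depth (ldt_bind T f) <= ldt_depth T + M)%N.
Proof.
move=> hf; apply: (@ldt_depth_bind_in _ _ (fun _ => True)) => //.
by elim: T => //= *; split.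
Qed.

Lemma ldt_klinear_bind A B k T (f : A -> ldt R V B) :
  ldt_klinear k T -> (forall o, ldt_klinear k (f o)) ->
  ldt_klinear k (ldt_bind T f).
Proof.
move=> hT hf; elim: T hT => [o _|a c tl IHl te IHe tg IHg /=]; first exact: hf.
by case/and4P=> -> /IHl -> /IHe -> /IHg ->.
Qed.

Fixpoint ldt_traverse K A (f : K -> ldt R V A) (ks : seq K) : ldt R V (seq A) :=
  if ks is k :: ks' then
    ldt_bind (f k) (fun a => ldt_bind (ldt_traverse f ks') (fun s => LLeaf (a :: s)))
  else LLeaf [::].

Lemma ldt_eval_traverse K A (f : K -> ldt R V A) ks x :
  ldt_eval (ldt_traverse f ks) x = [seq ldt_eval (f k) x | k <- ks].
Proof. by elim: ks => //= k ks IH; rewrite !ldt_eval_bind IH. Qed.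

Lemma ldt_depth_traverse K A (f : K -> ldt R V A) ks M :
  (forall k, (ldt_depth (f k) <= M)%N) ->
  (ldt_depth (ldt_traverse f ks) <= size ks * M)%N.
Proof.
move=> hf; elim: ks => //= k ks IH.
apply: leq_trans (ldt_depth_bind _ (M := size ks * M) _) _.
  by move=> a; apply: leq_trans (ldt_depth_bind _ (M := 0) _) _; rewrite ?addn0.
by rewrite mulSn leq_add2r hf.
Qed.

Lemma ldt_klinear_traverse K A k (f : K -> ldt R V A) ks :
  (forall i, ldt_klinear k (f i)) -> ldt_klinear k (ldt_traverse f ks).
Proof.
move=> hf; elim: ks => //= i ks IH.
by apply: ldt_klinear_bind => // a; apply: ldt_klinear_bind.
Qed.

End DecisionTreeMonad.

Section ComparisonSort.

Variables (R : realType) (V : Type) (U : eqType).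
Variables (var : U -> V) (off : U -> R) (rank : U -> nat).
Hypothesis rank_inj : injective rank.

Definition atom_val (x : V -> R) (u : U) : R := x (var u) + off u.

Definition atom_le (x : V -> R) (u v : U) : bool :=
  (atom_val x u < atom_val x v) ||
  ((atom_val x u == atom_val x v) && (rank u <= rank v)%N).

Lemma atom_le_refl x : reflexive (atom_le x).
Proof. by move=> u; rewrite /atom_le eqxx leqnn orbT. Qed.

Lemma atom_le_total x : total (atom_le x).
Proof.
move=> u v; rewrite /atom_le.
by case: (ltgtP (atom_val x u) (atom_val x v)) => //= _; apply: leq_total.
Qed.

Lemma atom_le_trans x : transitive (atom_le x).
Proof.
move=> v u w; rewrite /atom_le.
case/orP=> [h1|/andP[/eqP h1 h1']]; case/orP=> [h2|/andP[/eqP h2 h2']].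
- by rewrite (lt_trans h1 h2).
- by rewrite -h2 h1.
- by rewrite h1 h2.
- by rewrite h1 h2 eqxx (leq_trans h1' h2') orbT.
Qed.

Lemma atom_le_anti x : antisymmetric (atom_le x).
Proof.
move=> u v; rewrite /atom_le.
case: (ltgtP (atom_val x u) (atom_val x v)) => //= _ /andP[h1 h2].
by apply: rank_inj; apply/eqP; rewrite eqn_leq h1 h2.
Qed.

Definition cmp_node A (u v : U) (tT tF : ldt R V A) : ldt R V A :=
  LNode [:: (1, var u); (-1, var v)] (off u - off v)
        tT (if (rank u <= rank v)%N then tT else tF) tF.

Lemma ldt_eval_cmp_node A u v (tT tF : ldt R V A) x :
  ldt_eval (cmp_node u v tT tF) x =
  if atom_le x u v then ldt_eval tT x else ldt_eval tF x.
Proof.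
rewrite /cmp_node /=.
have -> : lin_val [:: (1, var u); (-1, var v)] (off u - off v) x
          = atom_val x u - atom_val x v.
  by rewrite /lin_val !big_cons big_nil /atom_val /=; lra.
rewrite /atom_le subr_lt0 subr_eq0.
by case: ltgtP => //=; case: leqP.
Qed.

Lemma ldt_depth_cmp_node A u v (tT tF : ldt R V A) M :
  (ldt_depth tT <= M)%N -> (ldt_depth tF <= M)%N ->
  (ldt_depth (cmp_node u v tT tF) <= M.+1)%N.
Proof. by rewrite /cmp_node => hT hF /=; case: ifP => _; lia. Qed.

Lemma ldt_klinear_cmp_node A u v (tT tF : ldt R V A) :
  ldt_klinear 2 tT -> ldt_klinear 2 tF -> ldt_klinear 2 (cmp_node u v tT tF).
Proof. by rewrite /cmp_node => hT hF /=; case: (rank u <= rank v)%N; rewrite hT hF. Qed.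

Lemma ldt_all_cmp_node A (P : A -> Prop) u v (tT tF : ldt R V A) :
  ldt_all P tT -> ldt_all P tF -> ldt_all P (cmp_node u v tT tF).
Proof. by rewrite /cmp_node => hT hF /=; case: ifP. Qed.

Fixpoint merge_tree (s1 s2 : seq U) : ldt R V (seq U) :=
  if s1 is u1 :: s1' then
    let fix merge_tree_s1 s2 :=
      if s2 is u2 :: s2' then
        cmp_node u1 u2
          (ldt_bind (merge_tree s1' s2) (fun r => LLeaf (u1 :: r)))
          (ldt_bind (merge_tree_s1 s2') (fun r => LLeaf (u2 :: r)))
      else LLeaf s1 in
    merge_tree_s1 s2
  else LLeaf s2.

Lemma merge_tree_cons u1 u2 s1 s2 :
  merge_tree (u1 :: s1) (u2 :: s2) =
  cmp_node u1 u2 (ldt_bind (merge_tree s1 (u2 :: s2)) (fun r => LLeaf (u1 :: r)))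
                 (ldt_bind (merge_tree (u1 :: s1) s2) (fun r => LLeaf (u2 :: r))).
Proof. by []. Qed.

Lemma ldt_eval_merge_tree s1 s2 x :
  ldt_eval (merge_tree s1 s2) x = merge (atom_le x) s1 s2.
Proof.
elim: s1 s2 => [|u1 s1 IH1] s2 //; elim: s2 => [|u2 s2 IH2] //.
by rewrite merge_tree_cons ldt_eval_cmp_node !ldt_eval_bind IH1 IH2 /=; case: atom_le.
Qed.

Lemma ldt_depth_merge_tree s1 s2 :
  (ldt_depth (merge_tree s1 s2) <= size s1 + size s2)%N.
Proof.
elim: s1 s2 => [|u1 s1 IH1] s2 //; elim: s2 => [|u2 s2 IH2] //.
rewrite merge_tree_cons /= addnS; apply: ldt_depth_cmp_node.
  apply: leq_trans (ldt_depth_bind _ (M := 0) _) _ => //.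
  by rewrite addn0 (leq_trans (IH1 _)) //= addnS.
apply: leq_trans (ldt_depth_bind _ (M := 0) _) _ => //.
by rewrite addn0 (leq_trans IH2) // addSn.
Qed.

Lemma ldt_klinear_merge_tree s1 s2 : ldt_klinear 2 (merge_tree s1 s2).
Proof.
elim: s1 s2 => [|u1 s1 IH1] s2 //; elim: s2 => [|u2 s2 IH2] //.
by rewrite merge_tree_cons; apply: ldt_klinear_cmp_node; apply: ldt_klinear_bind.
Qed.

Lemma ldt_all_size_merge_tree s1 s2 :
  ldt_all (fun r => size r = (size s1 + size s2)%N) (merge_tree s1 s2).
Proof.
elim: s1 s2 => [|u1 s1 IH1] s2 //.
elim: s2 => [|u2 s2 IH2]; first by rewrite /= addn0.
rewrite merge_tree_cons; apply: ldt_all_cmp_node.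
  by apply: ldt_all_bind (IH1 _) _ => r /= ->.
by apply: ldt_all_bind IH2 _ => r /= ->; rewrite /= addnS.
Qed.

(* Top-down merge sort on lists of length at most [2 ^ m]. *)
Fixpoint sort_tree (m : nat) (s : seq U) : ldt R V (seq U) :=
  if m is m'.+1 then
    ldt_bind (sort_tree m' (take (2 ^ m') s)) (fun r1 =>
    ldt_bind (sort_tree m' (drop (2 ^ m') s)) (fun r2 => merge_tree r1 r2))
  else LLeaf s.

Lemma ldt_all_size_sort_tree m s :
  ldt_all (fun r => size r = size s) (sort_tree m s).
Proof.
elim: m s => [|m IH] s //=.
apply: ldt_all_bind (IH _) _ => r1 h1; apply: ldt_all_bind (IH _) _ => r2 h2.
by rewrite -(cat_take_drop (2 ^ m) s) size_cat -h1 -h2; apply: ldt_all_size_merge_tree.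
Qed.

Lemma ldt_depth_sort_tree m s :
  (ldt_depth (sort_tree m s) <= m * size s)%N.
Proof.
elim: m s => [|m IH] s //=.
have size_s : size s = (size (take (2 ^ m) s) + size (drop (2 ^ m) s))%N.
  by rewrite -size_cat cat_take_drop.
apply: leq_trans (ldt_depth_bind_in (M := m * size (drop (2 ^ m) s) + size s)
                    (ldt_all_size_sort_tree _ _) _) _.
  move=> r1 h1; apply: leq_trans (ldt_depth_bind_in (M := size s)
                                    (ldt_all_size_sort_tree _ _) _) _.
    by move=> r2 h2; rewrite size_s -h1 -h2 ldt_depth_merge_tree.
  by rewrite leq_add2r IH.
by have := IH (take (2 ^ m) s); rewrite mulSn size_s mulnDr; lia.
Qed.

Lemma ldt_klinear_sort_tree m s : ldt_klinear 2 (sort_tree m s).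
Proof.
elim: m s => [|m IH] s //=.
by apply: ldt_klinear_bind => // r1; apply: ldt_klinear_bind => // r2;
   apply: ldt_klinear_merge_tree.
Qed.

Lemma perm_eval_sort_tree m s x : perm_eq (ldt_eval (sort_tree m s) x) s.
Proof.
elim: m s => [|m IH] s //=.
rewrite !ldt_eval_bind ldt_eval_merge_tree perm_merge.
by rewrite -[in X in perm_eq _ X](cat_take_drop (2 ^ m) s) perm_cat.
Qed.

Lemma sorted_eval_sort_tree m s x :
  (size s <= 2 ^ m)%N -> sorted (atom_le x) (ldt_eval (sort_tree m s) x).
Proof.
elim: m s => [|m IH] s size_s /=; first by case: s size_s => [|u []].
have take_small : (size (take (2 ^ m) s) <= 2 ^ m)%N by rewrite size_take_min geq_minl.
have drop_small : (size (drop (2 ^ m) s) <= 2 ^ m)%N.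
  by rewrite size_drop leq_subLR addnn -mul2n -expnS.
rewrite !ldt_eval_bind ldt_eval_merge_tree.
by apply: merge_sorted; [exact: atom_le_total | exact: IH | exact: IH].
Qed.

Lemma ldt_eval_sort_tree m s x :
  (size s <= 2 ^ m)%N -> ldt_eval (sort_tree m s) x = sort (atom_le x) s.
Proof.
move=> size_s; apply: (sorted_eq (@atom_le_trans x) (@atom_le_anti x)).
- exact: sorted_eval_sort_tree.
- exact/sort_sorted/atom_le_total.
- by rewrite perm_sym perm_sort perm_sym perm_eval_sort_tree.
Qed.

End ComparisonSort.

Lemma leq_index_sorted (T : eqType) (leT : rel T) (s : seq T) (u v : T) :
  reflexive leT -> transitive leT -> antisymmetric leT -> sorted leT s ->
  u \in s -> v \in s -> (index u s <= index v s)%N = leT u v.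
Proof.
move=> le_refl le_trans le_anti s_sorted us vs; apply/idP/idP.
  exact: (sorted_leq_index le_trans le_refl s_sorted).
move=> le_uv; rewrite leqNgt; apply/negP => lt_vu.
have le_vu := sorted_ltn_index le_trans s_sorted v u vs us lt_vu.
by move: lt_vu; rewrite (le_anti u v) ?le_uv ?le_vu ?ltnn.
Qed.

Lemma linf_norm_le (R : realType) (d : nat) (f : 'I_d -> R) (delta : R) :
  0 <= delta -> (linf_norm f <= delta) = [forall k, `|f k| <= delta].
Proof.
move=> delta_ge0; apply/idP/forallP => [/bigmax_leP[_ le_f] k|le_f].
  exact: le_f.
by apply/bigmax_leP; split.
Qed.

Section CoordinateSort.

Variables (R : realType) (n d : nat) (delta : R).

(* [(i, false)] stands for the real [p_i[k]] and [(i, true)] for [p_i[k] + delta]. *)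
Definition shift (u : 'I_n * bool) : R := if u.2 then delta else 0.

Definition shift_rank (u : 'I_n * bool) : nat := (u.2 * n + u.1)%N.

Lemma shift_rank_inj : injective shift_rank.
Proof.
move=> [i b] [j b']; rewrite /shift_rank /= => eq_rank.
have lt_i := ltn_ord i; have lt_j := ltn_ord j.
have eq_b : b = b' by case: b b' eq_rank => [] [] /=; lia.
by rewrite -eq_b in eq_rank *; congr pair; apply: val_inj => /=; lia.
Qed.

Definition coord_var (k : 'I_d) (u : 'I_n * bool) : 'I_n * 'I_d := (u.1, k).

Definition coord_le (k : 'I_d) (x : 'I_n * 'I_d -> R) :=
  atom_le (coord_var k) shift shift_rank x.

Definition coord_sort_tree (k : 'I_d) : ldt R ('I_n * 'I_d) (seq ('I_n * bool)) :=
  sort_tree (coord_var k) shift shift_rank (up_log 2 n).+1 (enum {: 'I_n * bool}).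

Lemma size_enum_shift : size (enum {: 'I_n * bool}) = (n * 2)%N.
Proof. by rewrite -cardE card_prod card_ord card_bool. Qed.

Lemma ldt_eval_coord_sort_tree k x :
  ldt_eval (coord_sort_tree k) x = sort (coord_le k x) (enum {: 'I_n * bool}).
Proof.
apply: ldt_eval_sort_tree; first exact: shift_rank_inj.
by rewrite size_enum_shift expnS mulnC leq_mul2l up_logP.
Qed.

Lemma ldt_depth_coord_sort_tree k :
  (ldt_depth (coord_sort_tree k) <= (up_log 2 n).+1 * (n * 2))%N.
Proof. by rewrite -size_enum_shift ldt_depth_sort_tree. Qed.

Lemma coord_le_shift k x i j :
  coord_le k x (i, false) (j, true) = (x (i, k) <= x (j, k) + delta).
Proof.
rewrite /coord_le /atom_le /atom_val /coord_var /shift /shift_rank /= addr0.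
have -> : (0 * n + i <= 1 * n + j)%N by have := ltn_ord i; lia.
by rewrite andbT le_eqVlt orbC.
Qed.

Lemma index_coord_sort k x i j :
  let s := sort (coord_le k x) (enum {: 'I_n * bool}) in
  (index (i, false) s <= index (j, true) s)%N &&
  (index (j, false) s <= index (i, true) s)%N = (`|x (i, k) - x (j, k)| <= delta).
Proof.
have mem_s u : u \in sort (coord_le k x) (enum {: 'I_n * bool}).
  by rewrite mem_sort mem_enum.
have index_le u v := leq_index_sorted (atom_le_refl (coord_var k) shift shift_rank x)
  (@atom_le_trans _ _ _ (coord_var k) shift shift_rank x)
  (@atom_le_anti _ _ _ (coord_var k) shift shift_rank shift_rank_inj x)
  (sort_sorted (atom_le_total (coord_var k) shift shift_rank x) _) (mem_s u) (mem_s v).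
rewrite /= !index_le -/(coord_le k x) !coord_le_shift ler_norml.
by apply/andP/andP => -[le1 le2]; split; lra.
Qed.

End CoordinateSort.

Definition close_pairs_of_sorted (n d : nat) (ss : seq (seq ('I_n * bool))) :
    {set 'I_n * 'I_n} :=
  [set ij : 'I_n * 'I_n | (ij.1 != ij.2) && [forall k : 'I_d,
     let s := nth [::] ss k in
     (index (ij.1, false) s <= index (ij.2, true) s)%N &&
     (index (ij.2, false) s <= index (ij.1, true) s)%N]].

Theorem corollary1 (R : realType) :
  exists C : nat, forall (d n : nat), (2 <= n)%N ->
  forall delta : R, 0 < delta ->
  exists T : ldt R ('I_n * 'I_d) {set 'I_n * 'I_n},
    ldt_klinear 2 T /\
    (ldt_depth T <= C * d * n * up_log 2 n)%N /\
    forall p : 'I_n -> 'I_d -> R, injective p ->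
      ldt_eval T (fun v => p v.1 v.2) = close_pairs delta p.
Proof.
exists 4%N => d n n_ge2 delta delta_gt0.
exists (ldt_bind (ldt_traverse (coord_sort_tree n delta) (enum 'I_d))
                 (fun ss => LLeaf (close_pairs_of_sorted d ss))).
split; [|split].
- apply: ldt_klinear_bind => //; apply: ldt_klinear_traverse => k.
  exact: ldt_klinear_sort_tree.
- apply: leq_trans (ldt_depth_bind _ (M := 0) _) _ => //.
  rewrite addn0; apply: leq_trans (ldt_depth_traverse _ (ldt_depth_coord_sort_tree n delta)) _.
  have : (0 < up_log 2 n)%N by rewrite up_log_gt0.
  rewrite size_enum_ord; nia.
- move=> p _; rewrite ldt_eval_bind ldt_eval_traverse /=.
  apply/setP => -[i j]; rewrite !inE /=; congr andb.
  rewrite linf_norm_le ?ltW //; apply: eq_forallb => k.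
  rewrite (nth_map k) ?size_enum_ord // nth_ord_enum ldt_eval_coord_sort_tree.
  exact: index_coord_sort.
Qed.
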